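(* Let $n\ge k\ge d$ be positive integers and $\boldsymbol{\alpha}_k=(\alpha_1,\dots,\alpha_k)$ a list of $k$ distinct rational numbers. Let $\mathcal{Z}_{n,k,d}(\boldsymbol{\alpha}_k)\subseteq\mathbb{Q}^{n+d}$ be the set of points $(z_1,\dots,z_n;z_{n+1},\dots,z_{n+d})$ such that every coordinate lies in $\{\alpha_1,\dots,\alpha_k\}$, the coordinates $z_{n+1},\dots,z_{n+d}$ are distinct, and $\{z_1,\dots,z_n\}=\{z_{n+1},\dots,z_{n+d}\}$. Then the vanishing ideal $\mathbf{I}(\mathcal{Z}_{n,k,d}(\boldsymbol{\alpha}_k))\subseteq\mathbb{Q}[x_1,\dots,x_n,y_1,\dots,y_d]$ is generated by \begin{itemize} \item $e_r(\boldsymbol{\alpha}_k) - e_{r-1}(\boldsymbol{\alpha}_k)h_1(\mathbf{y}_d) + \cdots + (-1)^r h_r(\mathbf{y}_d)$ for all $r>k-d$, \item $e_r(\mathbf{x}_n) - e_{r-1}(\mathbf{x}_n)h_1(\mathbf{y}_d)+\cdots+(-1)^r h_r(\mathbf{y}_d)$ for all $r>n-d$, \item $x_i^d - x_i^{d-1}e_1(\mathbf{y}_d)+\cdots+(-1)^d e_d(\mathbf{y}_d)$ for $i=1,\dots,n$. \end{itemize}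
   Context: The coordinate ring of $\mathbb{Q}^{n+d}$ is identified with $\mathbb{Q}[\mathbf{x}_n,\mathbf{y}_d]$, $\mathbf{x}_n=(x_1,\dots,x_n)$, $\mathbf{y}_d=(y_1,\dots,y_d)$. For a set $\mathcal{Z}$, $\mathbf{I}(\mathcal{Z})$ is the ideal of polynomials vanishing on $\mathcal{Z}$. $e_r,h_r$ are elementary and complete homogeneous symmetric polynomials (with $e_0=h_0=1$, $e_r=0$ when $r$ exceeds the number of variables). *)

From HB Require Import structures.
From mathcomp Require Import all_boot all_order all_algebra.
From mathcomp Require Export mpoly.
Set Implicit Arguments. Unset Strict Implicit. Unset Printing Implicit Defensive.
Import Order.TTheory GRing.Theory Num.Theory.
Local Open Scope ring_scope.

Definition esymf (R : comRingType) (m : nat) (F : 'I_m -> R) (r : nat) : R :=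
  \sum_(S : {set 'I_m} | #|S| == r) \prod_(i in S) F i.

Definition hsymf (R : comRingType) (m : nat) (F : 'I_m -> R) (r : nat) : R :=
  \sum_(f : {ffun 'I_m -> 'I_r.+1} | (\sum_i (f i : nat) == r)%N)
     \prod_i F i ^+ f i.

Definition in_ideal_gen (R : comRingType) (G : R -> Prop) (p : R) : Prop :=
  exists s : seq (R * R),
    (forall q, q \in s -> G q.2) /\ p = \sum_(q <- s) q.1 * q.2.

Section Gens.
Variables (n d : nat).
Definition PR := {mpoly rat[n + d]}.
Definition xv (i : 'I_n) : PR := 'X_(lshift d i).
Definition yv (j : 'I_d) : PR := 'X_(rshift n j).

Definition altsum (E : nat -> PR) (r : nat) : PR :=
  \sum_(j < r.+1) (-1) ^+ j * E (r - j)%N * hsymf yv j.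

Definition gen1 (k : nat) (alpha : 'I_k -> rat) (r : nat) : PR :=
  altsum (fun s => (esymf alpha s)%:MP) r.
Definition gen2 (r : nat) : PR := altsum (esymf xv) r.
Definition gen3 (i : 'I_n) : PR :=
  \sum_(j < d.+1) (-1) ^+ j * xv i ^+ (d - j) * esymf yv j.

Definition gens (k : nat) (alpha : 'I_k -> rat) (p : PR) : Prop :=
  (exists r, (k - d < r)%N /\ p = gen1 alpha r) \/
  (exists r, (n - d < r)%N /\ p = gen2 r) \/
  (exists i, p = gen3 i).

Definition inZ (k : nat) (alpha : 'I_k -> rat) (z : 'I_(n + d) -> rat) : Prop :=
  (forall t, exists a, z t = alpha a) /\
  injective (fun j : 'I_d => z (rshift n j)) /\
  (forall i : 'I_n, exists j : 'I_d, z (lshift d i) = z (rshift n j)) /\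
  (forall j : 'I_d, exists i : 'I_n, z (rshift n j) = z (lshift d i)).
End Gens.

(* Put A(t) = prod_a (1 + alpha_a t), X(t) = prod_i (1 + x_i t) and
   B(t) = prod_j 1 / (1 + y_j t), truncated at a suitable degree.  The first two
   families of generators are the coefficients of t^r in A B and X B, the third
   one is prod_j (x_i - y_j).  On Z the y_j are d distinct alpha's and d of the
   x_i, so B cancels d factors of A and of X and all generators vanish.
   Conversely, multiplying A B (or X B) by series that cancel all but one or two
   factors of B, and whose coefficients of degree >= d already lie in the ideal,
   and reading off a top coefficient, puts in the ideal the grid polynomials
   prod_a (z_t - alpha_a) and, for each grid point outside Z, a polynomial not
   vanishing there.  Modulo the grid polynomials every polynomial is congruent
   to its Lagrange interpolant on the grid, so the ideal contains every
   polynomial vanishing on Z. *)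

From mathcomp Require Import all_boot all_order all_algebra.
From mathcomp Require Import mpoly.
From mathcomp Require Import ring zify.
Set Implicit Arguments. Unset Strict Implicit. Unset Printing Implicit Defensive.
Import GRing.Theory.
Local Open Scope ring_scope.

Lemma size_index_enum (I : finType) : size (index_enum I) = #|I|.
Proof. by rewrite cardT enumT [index_enum _]unlock. Qed.

Section TruncatedSeries.
Variable R : comNzRingType.
Implicit Types (c : R) (p q : {poly R}).

Definition linX c : {poly R} := 1 + c *: 'X.
Definition geomX M c : {poly R} := \sum_(m < M.+1) c ^+ m *: 'X^m.

Definition eqmodX M p q := forall i, (i <= M)%N -> p`_i = q`_i.

Lemma coef_linX c i : (linX c)`_i = if i == 0%N then 1 else if i == 1%N then c else 0.
Proof.
rewrite /linX coefD coef1 coefZ coefX.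
by case: i => [|[|i]] /=; rewrite ?mulr0 ?mulr1 ?addr0 ?add0r.
Qed.

Lemma coef_geomX M c i : (geomX M c)`_i = if (i <= M)%N then c ^+ i else 0.
Proof.
rewrite /geomX coef_sum; under eq_bigr => m _ do rewrite coefZ coefXn.
case: leqP => [le_iM | lt_Mi].
  rewrite (bigD1 (Ordinal (le_iM : (i < M.+1)%N))) //= eqxx mulr1 big1 ?addr0 //.
  by move=> j /eqP ne_ji; case: eqP => [e|]; [case: ne_ji; apply: val_inj | rewrite mulr0].
rewrite big1 // => j _; case: eqP => [e|]; last by rewrite mulr0.
by move: (ltn_ord j); rewrite -e ltnS leqNgt lt_Mi.
Qed.

Lemma eqmodX_trans M p q r : eqmodX M p q -> eqmodX M q r -> eqmodX M p r.
Proof. by move=> pq qr i le_iM; rewrite pq ?qr. Qed.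

Lemma eqmodX_mul M p p' q q' : eqmodX M p p' -> eqmodX M q q' -> eqmodX M (p * q) (p' * q').
Proof.
move=> pp' qq' i le_iM; rewrite !coefM; apply: eq_bigr => j _.
rewrite pp' ?qq' //; last exact: leq_trans (leq_ord j) le_iM.
exact: leq_trans (leq_subr _ _) le_iM.
Qed.

Lemma eqmodX_mulr1 M p q : eqmodX M q 1 -> eqmodX M (p * q) p.
Proof. by move=> q1; rewrite -[X in eqmodX _ _ X]mulr1; apply: eqmodX_mul. Qed.

Lemma eqmodX_prod (I : Type) (r : seq I) (P : pred I) M (F G : I -> {poly R}) :
  (forall i, eqmodX M (F i) (G i)) ->
  eqmodX M (\prod_(i <- r | P i) F i) (\prod_(i <- r | P i) G i).
Proof. by move=> FG; apply: (big_ind2 (eqmodX M)) => // *; apply: eqmodX_mul. Qed.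

Lemma linX_geomXN M c : eqmodX M (linX c * geomX M (- c)) 1.
Proof.
move=> i le_iM; rewrite coefM coef1 big_ord_recl coef_linX /= subn0 coef_geomX le_iM mul1r.
case: i le_iM => [|i] le_iM /=; first by rewrite big_ord0 addr0 expr0.
rewrite big_ord_recl /= coef_linX /= subSS subn0 coef_geomX (ltnW le_iM) big1 ?addr0.
  by rewrite exprS mulNr addNr.
by move=> j _; rewrite coef_linX /= mul0r.
Qed.

Lemma prod_linX_geomXN (I : Type) (r : seq I) (P : pred I) M (y : I -> R) :
  eqmodX M ((\prod_(i <- r | P i) linX (y i)) * \prod_(i <- r | P i) geomX M (- y i)) 1.
Proof.
rewrite -big_split /=; apply: (@eqmodX_trans _ _ (\prod_(i <- r | P i) 1)).
  by apply: eqmodX_prod => i; apply: linX_geomXN.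
by rewrite big1_eq.
Qed.

Lemma esymfN m (F : 'I_m -> R) r : esymf (fun i => - F i) r = (-1) ^+ r * esymf F r.
Proof.
rewrite /esymf mulr_sumr; apply: eq_bigr => S /eqP cardS.
by rewrite prodrN cardS.
Qed.

Lemma hsymfN m (F : 'I_m -> R) r : hsymf (fun i => - F i) r = (-1) ^+ r * hsymf F r.
Proof.
rewrite /hsymf mulr_sumr; apply: eq_bigr => f /eqP sum_f.
under eq_bigr do rewrite exprNn.
by rewrite big_split /= prodrXr sum_f.
Qed.

Lemma coef_prod_linX m (F : 'I_m -> R) r : (\prod_i linX (F i))`_r = esymf F r.
Proof.
rewrite /linX; under eq_bigr do rewrite addrC.
rewrite bigA_distr coef_sum /esymf [in RHS]big_mkcond /=; apply: eq_bigr => S _.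
rewrite -big_mkcond /= scaler_prod prodr_const coefZ coefXn eq_sym.
by case: eqP; rewrite ?mulr1 ?mulr0.
Qed.

Lemma coef_prod_geomX M m (F : 'I_m -> R) r : (r <= M)%N ->
  (\prod_i geomX M (F i))`_r = hsymf F r.
Proof.
move=> le_rM; have -> : (\prod_i geomX M (F i))`_r = (\prod_i geomX r (F i))`_r.
  apply: (@eqmodX_prod _ _ _ r) => // i j le_jr.
  by rewrite !coef_geomX le_jr (leq_trans le_jr le_rM).
rewrite /geomX bigA_distr_bigA coef_sum /hsymf [in RHS]big_mkcond /=.
apply: eq_bigr => f _; rewrite scaler_prod prodrXr coefZ coefXn eq_sym.
by case: eqP; rewrite ?mulr1 ?mulr0.
Qed.

Lemma coef_linXM b q m : (linX b * q)`_m.+1 = q`_m.+1 + b * q`_m.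
Proof.
rewrite coefM big_ord_recl big_ord_recl /= !coef_linX /= subn0 subSS subn0 mul1r.
by rewrite big1 ?addr0 // => j _; rewrite coef_linX /= mul0r.
Qed.

Lemma coef_prod_linX_seq_gt (I : Type) (s : seq I) (F : I -> R) m :
  (size s < m)%N -> (\prod_(b <- s) linX (F b))`_m = 0.
Proof.
elim: s m => [|b s IH] [|m] //= lt_sm; first by rewrite big_nil coef1.
by rewrite big_cons coef_linXM !IH ?mulr0 ?addr0 // ltnW.
Qed.

Lemma coef_prod_linX_gt (I : finType) (A : {pred I}) (F : I -> R) m :
  (#|A| < m)%N -> (\prod_(i in A) linX (F i))`_m = 0.
Proof. by move=> lt_Am; rewrite -big_enum coef_prod_linX_seq_gt // -cardE. Qed.

(* [geomX M c] is 1 / (1 - c X) truncated at degree M, so past the degree of the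
   numerator the coefficients of prod_b (1 + F b X) / (1 - c X) form a geometric
   progression of ratio c. *)
Lemma coef_prod_linX_geomX (I : Type) (s : seq I) (F : I -> R) M c m :
  (size s <= m <= M)%N ->
  ((\prod_(b <- s) linX (F b)) * geomX M c)`_m = c ^+ (m - size s) * \prod_(b <- s) (F b + c).
Proof.
elim: s m => [|b s IH] m /andP[le_sm le_mM].
  by rewrite !big_nil mul1r mulr1 coef_geomX le_mM subn0.
case: m le_sm le_mM => // m; rewrite /= ltnS => le_sm le_mM.
rewrite big_cons -mulrA coef_linXM !IH ?le_mM ?(ltnW le_mM) ?(leqW le_sm) ?le_sm //.
by rewrite big_cons /= subSS subSn // exprS; ring.
Qed.

(* The factors of prod_a (1 + U a X) indexed by the image of g cancel the series,
   leaving a polynomial of degree K - d. *)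
Lemma coef_prod_linX_geomX_eq0 K d (U : 'I_K -> R) (y : 'I_d -> R) (g : 'I_d -> 'I_K) :
  injective g -> (forall j, U (g j) = y j) ->
  forall r, (K - d < r)%N -> ((\prod_a linX (U a)) * \prod_j geomX r (- y j))`_r = 0.
Proof.
move=> g_inj Ug r lt_r; set S := g @: [set: 'I_d].
rewrite (bigID (mem S)) /= [X in X * _]mulrC -mulrA.
have -> : \prod_(a in S) linX (U a) = \prod_j linX (y j).
  rewrite big_imset /=; last by move=> a b _ _; apply: g_inj.
  by rewrite (eq_bigl xpredT) => [|j]; [apply: eq_bigr => j _; rewrite Ug | rewrite /= in_setT].
rewrite (eqmodX_mulr1 _ (prod_linX_geomXN _ _ _)) //.
rewrite -(@eq_bigl _ _ _ _ _ (mem (~: S))) => [|a]; last by rewrite /= in_setC.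
apply: coef_prod_linX_gt.
have := cardsC S; rewrite card_imset // cardsT !card_ord; lia.
Qed.

End TruncatedSeries.

Section MapTruncatedSeries.
Variables (R S : comNzRingType) (f : {rmorphism R -> S}).

Lemma map_linX c : map_poly f (linX c) = linX (f c).
Proof. by rewrite /linX rmorphD rmorph1 -!mul_polyC rmorphM /= map_polyC map_polyX. Qed.

Lemma map_geomX M c : map_poly f (geomX M c) = geomX M (f c).
Proof.
rewrite /geomX rmorph_sum; apply: eq_bigr => m _.
by rewrite -!mul_polyC rmorphM /= map_polyC map_polyXn -rmorphXn.
Qed.

Lemma esymf_rmorph m (F : 'I_m -> R) r : esymf (fun i => f (F i)) r = f (esymf F r).
Proof. by rewrite /esymf rmorph_sum; apply: eq_bigr => A _; rewrite rmorph_prod. Qed.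

End MapTruncatedSeries.

Section IdealGen.
Variables (R : comNzRingType) (G : R -> Prop).
Local Notation J := (in_ideal_gen G).

Lemma in_ideal_gen0 : J 0.
Proof. by exists [::]; rewrite big_nil. Qed.

Lemma in_ideal_genG g : G g -> J g.
Proof.
move=> Gg; exists [:: (1, g)]; split; last by rewrite big_seq1 mul1r.
by move=> q; rewrite inE => /eqP ->.
Qed.

Lemma in_ideal_genD p q : J p -> J q -> J (p + q).
Proof.
move=> [s [sG ->]] [t [tG ->]]; exists (s ++ t); split; last by rewrite big_cat.
by move=> u; rewrite mem_cat => /orP[/sG | /tG].
Qed.

Lemma in_ideal_genMl x q : J q -> J (x * q).
Proof.
move=> [s [sG ->]]; exists [seq (x * u.1, u.2) | u <- s]; split.
  by move=> u /mapP[v vs ->] /=; apply: sG.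
by rewrite big_map mulr_sumr; apply: eq_bigr => u _; rewrite mulrA.
Qed.

Lemma in_ideal_genMr x q : J q -> J (q * x).
Proof. by rewrite mulrC; apply: in_ideal_genMl. Qed.

Lemma in_ideal_genB p q : J p -> J q -> J (p - q).
Proof. by move=> Jp Jq; rewrite -mulN1r; apply/in_ideal_genD/in_ideal_genMl. Qed.

Lemma in_ideal_gen_sum (I : Type) (r : seq I) (P : pred I) (F : I -> R) :
  (forall i, P i -> J (F i)) -> J (\sum_(i <- r | P i) F i).
Proof. by move=> JF; apply: big_ind => //; [apply: in_ideal_gen0 | apply: in_ideal_genD]. Qed.

Lemma in_ideal_gen_prodB (I : Type) (r : seq I) (A B : I -> R) :
  (forall i, J (A i - B i)) -> J (\prod_(i <- r) A i - \prod_(i <- r) B i).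
Proof.
move=> JAB; apply: (big_ind2 (fun a b => J (a - b))) => [|a1 b1 a2 b2 J1 J2|i _].
- by rewrite subrr; apply: in_ideal_gen0.
- have -> : a1 * a2 - b1 * b2 = a1 * (a2 - b2) + (a1 - b1) * b2 by ring.
  by apply: in_ideal_genD; [apply: in_ideal_genMl | apply: in_ideal_genMr].
- exact: JAB.
Qed.

Lemma in_ideal_gen_rmorph_eq0 (S : comNzRingType) (f : {rmorphism R -> S}) p :
  (forall g, G g -> f g = 0) -> J p -> f p = 0.
Proof.
move=> fG [s [sG ->]]; rewrite rmorph_sum big_seq big1 // => q /sG /fG fq.
by rewrite rmorphM fq mulr0.
Qed.

Definition ideal_coefs a M (p : {poly R}) :=
  forall r, (a < r)%N -> (r <= M)%N -> J p`_r.

Lemma ideal_coefsM a b M p q :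
  ideal_coefs a M p -> ideal_coefs b M q -> ideal_coefs (a + b) M (p * q).
Proof.
move=> Jp Jq r lt_r le_rM; rewrite coefM; apply: in_ideal_gen_sum => j _.
have [lt_aj | le_ja] := ltnP a j.
  by apply/in_ideal_genMr/Jp => //; apply: leq_trans (leq_ord j) le_rM.
apply/in_ideal_genMl/Jq; last exact: leq_trans (leq_subr _ _) le_rM.
have := ltn_ord j; lia.
Qed.

Lemma ideal_coefs_size a M (p : {poly R}) : (size p <= a.+1)%N -> ideal_coefs a M p.
Proof.
move=> le_pa r lt_ar _; rewrite nth_default; first exact: in_ideal_gen0.
exact: leq_trans le_pa lt_ar.
Qed.

Lemma ideal_coefs_prod_linX (I : finType) (A : {pred I}) (F : I -> R) a M :
  (#|A| <= a)%N -> ideal_coefs a M (\prod_(i in A) linX (F i)).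
Proof.
move=> le_Aa r lt_ar _; rewrite coef_prod_linX_gt; first exact: in_ideal_gen0.
exact: leq_ltn_trans le_Aa lt_ar.
Qed.

End IdealGen.

Section GridInterpolation.
Variables (F : fieldType) (N k : nat) (al : 'I_k -> F).
Hypothesis al_inj : injective al.
Variable G : {mpoly F[N]} -> Prop.
Local Notation J := (in_ideal_gen G).
Implicit Types (p q : {mpoly F[N]}) (f : {poly F}) (t : 'I_N).

Lemma in_ideal_genZ c p : J p -> J (c *: p).
Proof. by rewrite -mul_mpolyC; apply: in_ideal_genMl. Qed.

Definition mpoly_of_poly t f : {mpoly F[N]} := horner_alg 'X_t f.

Lemma meval_mpoly_of_poly t f z : (mpoly_of_poly t f).@[z] = f.[z t].
Proof.
elim/poly_ind: f => [|f c IH]; first by rewrite /mpoly_of_poly rmorph0 meval0 horner0.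
rewrite /mpoly_of_poly rmorphD rmorphM /= horner_algX horner_algC alg_mpolyC.
by rewrite mevalD mevalM mevalXU mevalC -/(mpoly_of_poly t f) IH hornerMXaddC.
Qed.

Hypothesis grid_in_ideal : forall t, J (\prod_a ('X_t - (al a)%:MP)).

Lemma in_ideal_mpoly_of_poly t f : (forall a, f.[al a] = 0) -> J (mpoly_of_poly t f).
Proof.
move=> f_al.
have rootsf : all (root f) [seq al a | a <- index_enum 'I_k].
  by apply/allP => x /mapP[a _ ->]; apply/eqP/f_al.
have uniqf : uniq_roots [seq al a | a <- index_enum 'I_k].
  by rewrite uniq_rootsE map_inj_uniq // index_enum_uniq.
have [q ->] := uniq_roots_prod_XsubC rootsf uniqf.
rewrite /mpoly_of_poly rmorphM /= big_map rmorph_prod /=; apply: in_ideal_genMl.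
rewrite (eq_bigr (fun a => 'X_t - (al a)%:MP)) ?grid_in_ideal // => a _.
by rewrite rmorphB /= horner_algX horner_algC alg_mpolyC.
Qed.

Definition lagrange (a : 'I_k) : {poly F} :=
  \prod_(b | b != a) (('X - (al b)%:P) * ((al a - al b)^-1)%:P).

Lemma lagrange_eval a c : (lagrange a).[al c] = (a == c)%:R.
Proof.
rewrite /lagrange horner_prod; have [<-|ne_ac] := eqVneq a c.
  apply: big1 => b ne_ba; rewrite hornerM hornerXsubC hornerC mulfV // subr_eq0.
  by apply: contra ne_ba => /eqP/al_inj ->.
by rewrite (bigD1 c) 1?eq_sym //= hornerM hornerXsubC hornerC subrr !mul0r.
Qed.

Definition grid_point (w : {ffun 'I_N -> 'I_k}) t : F := al (w t).

Definition grid_delta (w : {ffun 'I_N -> 'I_k}) : {mpoly F[N]} :=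
  \prod_t mpoly_of_poly t (lagrange (w t)).

Lemma grid_delta_eval w v : (grid_delta w).@[grid_point v] = (w == v)%:R.
Proof.
rewrite /grid_delta rmorph_prod /=.
under eq_bigr do rewrite meval_mpoly_of_poly lagrange_eval.
have [<-|ne_wv] := eqVneq w v; first by apply: big1 => t _; rewrite eqxx.
have [t ne_t] : exists t, w t != v t.
  by apply/existsP; apply: contraR ne_wv => /existsPn eq_wv; apply/eqP/ffunP => t; apply/eqP/negPn.
by rewrite (bigD1 t) //= (negbTE ne_t) mul0r.
Qed.

Definition interp p : {mpoly F[N]} := \sum_w p.@[grid_point w] *: grid_delta w.

Lemma interp_linear c p q : interp (c *: p + q) = c *: interp p + interp q.
Proof.
rewrite /interp scaler_sumr -big_split; apply: eq_bigr => w _ /=.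
by rewrite mevalD mevalZ scalerDl scalerA.
Qed.

(* Modulo the grid polynomials, X_t^e is its interpolant in X_t; take the product over t. *)
Lemma in_ideal_sub_interpX m : J ('X_[m] - interp 'X_[m]).
Proof.
have interp_var t : J ('X_t ^+ m t - \sum_a al a ^+ m t *: mpoly_of_poly t (lagrange a)).
  have -> : 'X_t ^+ m t - \sum_a al a ^+ m t *: mpoly_of_poly t (lagrange a)
          = mpoly_of_poly t ('X ^+ m t - \sum_a al a ^+ m t *: lagrange a).
    rewrite /mpoly_of_poly rmorphB rmorphXn /= horner_algX; congr (_ - _).
    rewrite linear_sum; apply: eq_bigr => a _.
    by rewrite -mul_polyC rmorphM /= horner_algC alg_mpolyC mul_mpolyC.
  apply: in_ideal_mpoly_of_poly => c; rewrite hornerD hornerN hornerXn horner_sum.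
  rewrite (bigD1 c) //= hornerZ lagrange_eval eqxx mulr1 big1 ?addr0 ?subrr // => b ne_bc.
  by rewrite hornerZ lagrange_eval (negbTE ne_bc) mulr0.
have := in_ideal_gen_prodB (index_enum 'I_N) interp_var.
rewrite /interp mpolyXE_id bigA_distr_bigA /=; congr (J (_ - _)).
apply: eq_bigr => w _; rewrite scaler_prod rmorph_prod /=; congr (_ *: _).
by apply: eq_bigr => t _; rewrite rmorphXn /= mevalXU.
Qed.

Lemma in_ideal_sub_interp p : J (p - interp p).
Proof.
elim/mpolyind: p => [|c m p _ _ IH].
  rewrite /interp big1 ?subrr => [|w _]; [exact: in_ideal_gen0 | by rewrite meval0 scale0r].
rewrite interp_linear opprD addrACA -scalerBr.
exact/in_ideal_genD/IH/in_ideal_genZ/in_ideal_sub_interpX.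
Qed.

Variable Z : ('I_N -> F) -> Prop.
Hypothesis separating_in_ideal :
  forall w, ~ Z (grid_point w) -> exists2 q, J q & q.@[grid_point w] != 0.

Lemma in_ideal_grid_delta w : ~ Z (grid_point w) -> J (grid_delta w).
Proof.
move=> /separating_in_ideal[q Jq qw_neq0].
have interp_qdelta : interp (q * grid_delta w) = q.@[grid_point w] *: grid_delta w.
  rewrite /interp (bigD1 w) //= big1 => [|v ne_vw].
    by rewrite addr0 mevalM grid_delta_eval eqxx mulr1.
  by rewrite mevalM grid_delta_eval eq_sym (negbTE ne_vw) mulr0 scale0r.
rewrite -[grid_delta w](scalerK qw_neq0) -interp_qdelta; apply: in_ideal_genZ.
rewrite -[interp _](subKr (q * grid_delta w)).
exact/in_ideal_genB/in_ideal_sub_interp/in_ideal_genMr.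
Qed.

Lemma in_ideal_of_vanishing p : (forall z, Z z -> p.@[z] = 0) -> J p.
Proof.
move=> p_van; rewrite -(subrK (interp p) p).
apply/in_ideal_genD/in_ideal_gen_sum; first exact: in_ideal_sub_interp.
move=> w _; have [->|pw_neq0] := eqVneq p.@[grid_point w] 0.
  by rewrite scale0r; apply: in_ideal_gen0.
by apply/in_ideal_genZ/in_ideal_grid_delta => /p_van; apply/eqP.
Qed.

End GridInterpolation.

Section GeneratingSeries.
Variables (n d k : nat) (alpha : 'I_k -> rat).
Local Notation PR := {mpoly rat[n + d]}.
Local Notation xv := (@xv n d).
Local Notation yv := (@yv n d).

Definition gf_alpha : {poly PR} := \prod_a linX (alpha a)%:MP.
Definition gf_x : {poly PR} := \prod_i linX (xv i).
Definition gf_y M : {poly PR} := \prod_j geomX M (- yv j).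

Lemma gen1_coef r M : (r <= M)%N -> gen1 n d alpha r = (gf_alpha * gf_y M)`_r.
Proof.
move=> le_rM; rewrite coefMr; apply: eq_bigr => j _.
rewrite coef_prod_linX coef_prod_geomX ?hsymfN ?(esymf_rmorph (@mpolyC _ rat)); last first.
  exact: leq_trans (leq_ord j) le_rM.
by ring.
Qed.

Lemma gen2_coef r M : (r <= M)%N -> gen2 n d r = (gf_x * gf_y M)`_r.
Proof.
move=> le_rM; rewrite coefMr; apply: eq_bigr => j _.
rewrite coef_prod_linX coef_prod_geomX ?hsymfN; last exact: leq_trans (leq_ord j) le_rM.
by ring.
Qed.

Lemma gen3_prod i : gen3 d i = \prod_j (xv i - yv j).
Proof.
have := @coef_prod_linX_geomX _ _ (index_enum 'I_d) (fun j => - yv j) d (xv i) d.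
rewrite size_index_enum card_ord leqnn subnn expr0 mul1r => /(_ isT).
rewrite (eq_bigr (fun j => xv i - yv j)) => [<-|j _]; last exact: addrC.
rewrite coefM; apply: eq_bigr => j _.
by rewrite coef_prod_linX esymfN coef_geomX leq_subr; ring.
Qed.

End GeneratingSeries.

Section GeneratorIdeal.
Variables (n d k : nat) (alpha : 'I_k -> rat).
Hypotheses (d_gt0 : (0 < d)%N) (le_dk : (d <= k)%N) (le_kn : (k <= n)%N).
Local Notation PR := {mpoly rat[n + d]}.
Local Notation xv := (@xv n d).
Local Notation yv := (@yv n d).
Local Notation J := (in_ideal_gen (@gens n d k alpha)).
Local Notation coefsJ := (ideal_coefs (@gens n d k alpha)).
Local Notation gf_alpha := (gf_alpha n d alpha).
Local Notation gf_x := (gf_x n d).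
Local Notation gf_y := (gf_y n d).

Lemma ideal_coefs_gf_alpha M : coefsJ (k - d) M (gf_alpha * gf_y M).
Proof. by move=> r lt_r le_rM; rewrite -gen1_coef //; apply: in_ideal_genG; left; exists r. Qed.

Lemma ideal_coefs_gf_x M : coefsJ (n - d) M (gf_x * gf_y M).
Proof.
by move=> r lt_r le_rM; rewrite -gen2_coef //; apply: in_ideal_genG; right; left; exists r.
Qed.

Lemma in_ideal_gen3_prod i : J (\prod_j (xv i - yv j)).
Proof. by rewrite -gen3_prod; apply: in_ideal_genG; right; right; exists i. Qed.

Lemma ideal_coefs_prod_linX_yv_geomX M i :
  coefsJ d.-1 M ((\prod_j linX (yv j)) * geomX M (- xv i)).
Proof.
move=> m lt_m le_mM.
rewrite coef_prod_linX_geomX ?size_index_enum ?card_ord ?le_mM ?andbT; last by lia.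
apply: in_ideal_genMl; rewrite (eq_bigr (fun j => - (xv i - yv j))) => [|j _]; last by ring.
by rewrite prodrN; apply/in_ideal_genMl/in_ideal_gen3_prod.
Qed.

Lemma in_ideal_coef_eqmodX K b P Q R : (d <= K)%N -> (b < d)%N ->
  coefsJ (K - d) K P -> coefsJ b K Q -> eqmodX K (P * Q) R -> J R`_K.
Proof.
move=> le_dK lt_bd JP JQ PQR; rewrite -PQR //.
by apply: (ideal_coefsM JP JQ) => //; lia.
Qed.

(* Multiplying by prod_(j != t) (1 + y_j X) cancels every factor of gf_y but the t-th. *)
Lemma in_ideal_prod_sub_yv (I : finType) (F : I -> PR) :
  (d <= #|I|)%N -> coefsJ (#|I| - d) #|I| ((\prod_b linX (F b)) * gf_y #|I|) ->
  forall t, J (\prod_b (F b - yv t)).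
Proof.
move=> le_dI JP t.
have JQ : coefsJ d.-1 #|I| (\prod_(j in predC1 t) linX (yv j)).
  by apply: ideal_coefs_prod_linX; rewrite cardC1 card_ord.
have := in_ideal_coef_eqmodX (R := (\prod_b linX (F b)) * geomX #|I| (- yv t)) le_dI _ JP JQ.
rewrite coef_prod_linX_geomX ?size_index_enum ?leqnn // subnn expr0 mul1r.
apply; first by rewrite prednK.
rewrite /gf_y (bigD1 t) //= mulrA -mulrA [X in _ * X]mulrC.
exact/eqmodX_mulr1/prod_linX_geomXN.
Qed.

Lemma in_ideal_grid_yv t : J (\prod_a ((alpha a)%:MP - yv t)).
Proof.
by apply: in_ideal_prod_sub_yv; rewrite card_ord //; apply: ideal_coefs_gf_alpha.
Qed.

Lemma in_ideal_prod_xv_sub_yv t : J (\prod_i (xv i - yv t)).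
Proof.
apply: in_ideal_prod_sub_yv; rewrite card_ord; last exact: ideal_coefs_gf_x.
exact: leq_trans le_kn.
Qed.

Lemma in_ideal_grid_xv i : J (\prod_a ((alpha a)%:MP - xv i)).
Proof.
have := in_ideal_coef_eqmodX (R := gf_alpha * geomX k (- xv i)) le_dk _
  (@ideal_coefs_gf_alpha k) (@ideal_coefs_prod_linX_yv_geomX k i).
rewrite coef_prod_linX_geomX ?size_index_enum ?card_ord ?leqnn // subnn expr0 mul1r.
apply; first by rewrite prednK.
rewrite /gf_y [_ * geomX _ _]mulrC mulrACA [X in _ * X]mulrC.
exact/eqmodX_mulr1/prod_linX_geomXN.
Qed.

Lemma in_ideal_repeated_yv j l : j != l ->
  J ((gf_alpha * geomX k (- yv j) * geomX k (- yv l))`_k.-1).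
Proof.
move=> ne_jl; have le2d : (2 <= d)%N.
  by move: (ltn_ord j) (ltn_ord l) ne_jl; rewrite -val_eqE /=; lia.
have JQ : coefsJ (d - 2 + 1) k ((\prod_(m in ~: [set j; l]) linX (yv m)) * 'X).
  apply: ideal_coefsM; last by apply: ideal_coefs_size; rewrite size_polyX.
  apply: ideal_coefs_prod_linX.
  by have := cardsC [set j; l]; rewrite cards2 ne_jl card_ord; lia.
have := in_ideal_coef_eqmodX
  (R := gf_alpha * geomX k (- yv j) * geomX k (- yv l) * 'X) le_dk _ (@ideal_coefs_gf_alpha k) JQ.
rewrite coefMX (_ : (k == 0)%N = false); last by apply/eqP; lia.
apply; first by lia.
rewrite /gf_y (bigD1 j) // (bigD1 l) 1?eq_sym //=.
rewrite (eq_bigl (mem (~: [set j; l]))) => [|m]; last by rewrite !inE negb_or.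
set Tj := geomX k _; set Tl := geomX k _; set PT := \prod_(m in _) _; set PL := \prod_(m in _) _.
have -> : gf_alpha * (Tj * (Tl * PT)) * (PL * 'X) = gf_alpha * Tj * Tl * 'X * (PL * PT) by ring.
exact/eqmodX_mulr1/prod_linX_geomXN.
Qed.

End GeneratorIdeal.

Section GeneratorZeros.
Variables (n d k : nat) (alpha : 'I_k -> rat).
Hypotheses (d_gt0 : (0 < d)%N) (le_dk : (d <= k)%N) (le_kn : (k <= n)%N).
Hypothesis alpha_inj : injective alpha.
Local Notation PR := {mpoly rat[n + d]}.
Local Notation xv := (@xv n d).
Local Notation yv := (@yv n d).
Local Notation J := (in_ideal_gen (@gens n d k alpha)).
Local Notation gf_alpha := (gf_alpha n d alpha).
Implicit Types (z : 'I_(n + d) -> rat).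

Lemma map_gf_alpha z : map_poly (meval z) gf_alpha = \prod_a linX (alpha a).
Proof. by rewrite /gf_alpha rmorph_prod; apply: eq_bigr => a _ /=; rewrite map_linX /= mevalC. Qed.

Lemma map_gf_x z : map_poly (meval z) (gf_x n d) = \prod_i linX (z (lshift d i)).
Proof. by rewrite /gf_x rmorph_prod; apply: eq_bigr => i _ /=; rewrite map_linX /= mevalXU. Qed.

Lemma map_geomX_yv z M j : map_poly (meval z) (geomX M (- yv j)) = geomX M (- z (rshift n j)).
Proof. by rewrite map_geomX /= mevalN mevalXU. Qed.

Lemma map_gf_y z M : map_poly (meval z) (gf_y n d M) = \prod_j geomX M (- z (rshift n j)).
Proof. by rewrite /gf_y rmorph_prod; apply: eq_bigr => j _ /=; rewrite map_geomX_yv. Qed.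

Lemma meval_gen3 z i : (gen3 d i).@[z] = \prod_j (z (lshift d i) - z (rshift n j)).
Proof. by rewrite gen3_prod rmorph_prod; apply: eq_bigr => j _; rewrite /= mevalB !mevalXU. Qed.

Lemma gens_vanish z : inZ alpha z -> forall g : PR, gens alpha g -> g.@[z] = 0.
Proof.
move=> [z_grid [y_inj [x_in_y y_in_x]]] g.
case=> [[r [lt_r ->]] | [[r [lt_r ->]] | [i ->]]].
- have [a_of za] := fin_all_exists (fun j => z_grid (rshift n j)).
  rewrite (gen1_coef _ _ _ (leqnn r)) -coef_map rmorphM /= map_gf_alpha map_gf_y.
  apply: (coef_prod_linX_geomX_eq0 (g := a_of)) => // j l /(congr1 alpha).
  by rewrite -!za => /y_inj.
- have [i_of zi] := fin_all_exists y_in_x.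
  rewrite (gen2_coef _ _ (leqnn r)) -coef_map rmorphM /= map_gf_x map_gf_y.
  apply: (coef_prod_linX_geomX_eq0 (g := i_of)) => // j l.
  by move/(congr1 (fun i => z (lshift d i))); rewrite -!zi => /y_inj.
- have [j zij] := x_in_y i.
  by rewrite meval_gen3 (bigD1 j) //= zij subrr mul0r.
Qed.

Lemma meval_repeated_yv z j l a0 : z (rshift n j) = alpha a0 -> z (rshift n l) = alpha a0 ->
  ((gf_alpha * geomX k (- yv j) * geomX k (- yv l))`_k.-1).@[z] != 0.
Proof.
move=> zj zl; rewrite -coef_map !rmorphM /= map_gf_alpha !map_geomX_yv zj zl.
rewrite (bigD1 a0) //=.
have -> : \prod_(a | a != a0) linX (alpha a) = \prod_(a <- enum (predC1 a0)) linX (alpha a).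
  by rewrite big_enum.
set Q := \prod_(a <- _) _; set T := geomX k _.
have -> : linX (alpha a0) * Q * T * T = Q * T * (linX (alpha a0) * T) by ring.
rewrite (eqmodX_mulr1 _ (@linX_geomXN _ k _)) ?leq_pred // coef_prod_linX_geomX; last first.
  by rewrite -cardE cardC1 card_ord leqnn leq_pred.
rewrite -cardE cardC1 card_ord subnn expr0 mul1r big_enum /=.
apply/prodf_neq0 => a ne_a; rewrite subr_eq0.
by apply: contra ne_a => /eqP/alpha_inj ->.
Qed.

Lemma gens_separate w : ~ inZ alpha (grid_point alpha w) ->
  exists2 q, J q & q.@[grid_point alpha w] != 0.
Proof.
set z := grid_point alpha w => notZ.
case: (boolP [exists i, [forall j, z (lshift d i) != z (rshift n j)]]).
  case/existsP=> i /forallP x_notin_y; exists (gen3 d i).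
    by apply: in_ideal_genG; right; right; exists i.
  by rewrite meval_gen3; apply/prodf_neq0 => j _; rewrite subr_eq0.
move=> /existsPn x_in_y.
case: (boolP [exists j, exists l, (j != l) && (z (rshift n j) == z (rshift n l))]).
  case/existsP=> j /existsP[l /andP[ne_jl /eqP zjl]].
  exists ((gf_alpha * geomX k (- yv j) * geomX k (- yv l))`_k.-1).
    exact: in_ideal_repeated_yv.
  by apply: (meval_repeated_yv (a0 := w (rshift n j))) => //; rewrite -zjl.
move=> /existsPn y_inj.
case: (boolP [exists j, [forall i, z (rshift n j) != z (lshift d i)]]).
  case/existsP=> j /forallP y_notin_x; exists (\prod_i (xv i - yv j)).
    exact: in_ideal_prod_xv_sub_yv.
  rewrite rmorph_prod; apply/prodf_neq0 => i _ /=.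
  by rewrite mevalB !mevalXU subr_eq0 eq_sym.
move=> /existsPn y_in_x; case: notZ; split; [|split; [|split]].
- by move=> t; exists (w t).
- move=> j l /= zjl; apply/eqP; apply: contraNT (y_inj j) => ne_jl.
  by apply/existsP; exists l; rewrite ne_jl zjl eqxx.
- by move=> i; have /forallPn[j /negPn /eqP] := x_in_y i; exists j.
- by move=> j; have /forallPn[i /negPn /eqP] := y_in_x j; exists i.
Qed.

Lemma in_ideal_grid t : J (\prod_a ('X_t - (alpha a)%:MP)).
Proof.
have [[i ->] | [j ->]] : (exists i, t = lshift d i) \/ (exists j, t = rshift n j).
- by case: (splitP t) => [i|j] eq_t; [left; exists i | right; exists j]; apply: val_inj.
- rewrite (eq_bigr (fun a => - ((alpha a)%:MP - xv i))) => [|a _]; last by rewrite opprB.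
  by rewrite prodrN; apply/in_ideal_genMl/in_ideal_grid_xv.
- rewrite (eq_bigr (fun a => - ((alpha a)%:MP - yv j))) => [|a _]; last by rewrite opprB.
  by rewrite prodrN; apply/in_ideal_genMl/in_ideal_grid_yv.
Qed.

End GeneratorZeros.

Unset Implicit Arguments.
Set Strict Implicit.

Theorem lemma3p2 (n k d : nat) (alpha : 'I_k -> rat) :
  (0 < d)%N -> (d <= k)%N -> (k <= n)%N -> injective alpha ->
  forall p : {mpoly rat[n + d]},
    (forall z : 'I_(n + d) -> rat, inZ alpha z -> p.@[z] = 0) <->
    in_ideal_gen (gens alpha) p.
Proof.
move=> d_gt0 le_dk le_kn alpha_inj p; split => [p_van | p_in z zZ].
  apply: (in_ideal_of_vanishing alpha_inj _ _ p_van) => [t | w].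
    exact: in_ideal_grid.
  exact: gens_separate.
exact: (in_ideal_gen_rmorph_eq0 (f := meval z) (gens_vanish zZ) p_in).
Qed.
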